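(* Let $F$ be a field of characteristic $0$, $n\ge 1$, $i=\lfloor n/2\rfloor$, $j=\lfloor (n-1)/2\rfloor$. Let $f=p_{2a_1+1}\cdots p_{2a_{i+1}+1}$ be a long product, i.e. $a_1,\dots,a_{i+1}>j$. Suppose $f=\alpha_1g_1+\dots+\alpha_mg_m$ with $\alpha_\ell\in F$ and $g_1,\dots,g_m$ pairwise distinct proper products. Then every $g_\ell=p_1^{c_1}p_3^{c_3}\cdots p_{2j+1}^{c_{2j+1}}p_{2b_1+1}\cdots p_{2b_{i'}+1}$ with $\alpha_\ell\neq 0$ has at least one of $c_1,c_3,\dots,c_{2j+1}$ positive.
   Context: $p_k=x_1^k+\dots+x_n^k$. A proper product is a polynomial $p_1^{c_1}p_3^{c_3}\cdots p_{2j+1}^{c_{2j+1}}p_{2b_1+1}\cdots p_{2b_{i'}+1}$ with integers $c_1,\dots,c_{2j+1}\ge 0$, $0\le i'\le i$, and integers $b_k>j$ (a multiset); distinct means distinct exponent data. *)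

From HB Require Import structures.
From mathcomp Require Import all_boot all_order all_algebra.
From mathcomp Require Import mpoly.
Set Implicit Arguments. Unset Strict Implicit. Unset Printing Implicit Defensive.
Import GRing.Theory.
Local Open Scope ring_scope.

Definition psum (F : fieldType) (n d : nat) : {mpoly F[n]} :=
  \sum_(k < n) 'X_k ^+ d.

(* Exponent data of a proper product: (c, bs) where c = [c_1; c_3; ...; c_{2j+1}]
   (c`_k is the exponent of p_{2k+1}) and bs is the multiset {b_1,...,b_{i'}},
   represented canonically as a sorted list. *)
Definition proper_data (n : nat) (d : seq nat * seq nat) : bool :=
  [&& size d.1 == (n.-1)./2 .+1,
      sorted leq d.2,
      all (fun b => (n.-1)./2 < b) d.2 &
      size d.2 <= n./2]%N.

Definition proper_eval (F : fieldType) (n : nat) (d : seq nat * seq nat) : {mpoly F[n]} :=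
  (\prod_(k < size d.1) psum F n (2 * k + 1) ^+ (nth 0%N d.1 k)) *
  \prod_(b <- d.2) psum F n (2 * b + 1).

Definition long_prod (F : fieldType) (n : nat) (a : seq nat) : {mpoly F[n]} :=
  \prod_(x <- a) psum F n (2 * x + 1).

From HB Require Import structures.
From mathcomp Require Import all_boot all_order all_algebra.
From mathcomp Require Import mpoly.
From mathcomp Require Import ring.
Import GRing.Theory.
Local Open Scope ring_scope.

(* Substitute [x_j := u_j + s_j t] and [x_(i+j) := - u_j] for [j < i = n./2], and [0] for the
   variable left over when [n] is odd. Each odd power sum [p_(2k+1)] becomes a polynomial in [t]
   without constant term whose coefficient of [t] is [(2k+1) * \sum_(j < i) u_j^(2k) s_j], so a
   product of [r] odd power sums is [O(t^r)] with the product of these weighted power sums as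
   coefficient of [t^r]. The long product has [i+1] factors, a proper product without
   [p_1, ..., p_(2j+1)] at most [i]; taking the coefficient of [t^r] for the least number [r] of
   factors of a term with nonzero coefficient yields a vanishing linear combination of products
   of [r] weighted power sums. These products are linearly independent for distinct multisets of
   exponents, and distinct proper products have distinct multisets of factors, a contradiction. *)

(* The coefficient of [t] in [\prod_(k <- K) (a k + b k * t)]. *)
Fixpoint lin_term {R : comNzRingType} (a b : nat -> R) (K : seq nat) : R :=
  if K is k :: K' then a k * lin_term a b K' + b k * \prod_(k' <- K') a k' else 0.

Section LinearFactors.
Variable R : comNzRingType.

Lemma coef01_linear_mul (a b : R) (q : {poly R}) :
  ((a%:P + b%:P * 'X) * q)`_0 = a * q`_0 /\
  ((a%:P + b%:P * 'X) * q)`_1 = a * q`_1 + b * q`_0.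
Proof. by rewrite mulrDl -mulrA !coefD !coefCM !coefXM /= mulr0 addr0. Qed.

Lemma coef01_linear_exp (a b : R) d :
  ((a%:P + b%:P * 'X) ^+ d)`_0 = a ^+ d /\
  ((a%:P + b%:P * 'X) ^+ d)`_1 = d%:R * a ^+ d.-1 * b.
Proof.
elim: d => [|d [IH0 IH1]]; first by rewrite expr0 !coef1 /= !mul0r.
rewrite exprS; have [-> ->] := coef01_linear_mul a b ((a%:P + b%:P * 'X) ^+ d).
rewrite IH0 IH1 exprS; split=> //.
by case: d {IH0 IH1} => [|d] /=; rewrite ?expr0 ?exprS; ring.
Qed.

Lemma coef1_prod_linear (a b : nat -> R) K :
  (\prod_(k <- K) ((a k)%:P + (b k)%:P * 'X))`_1 = lin_term a b K.
Proof.
elim: K => [|k K IH]; first by rewrite big_nil coef1.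
rewrite big_cons (coef01_linear_mul (a k) (b k) _).2 IH.
rewrite -horner_coef0 horner_prod; congr (_ + _ * _).
by apply: eq_bigr => k' _; rewrite hornerD hornerM hornerX mulr0 addr0 hornerC.
Qed.

Lemma horner_lin_term_Xn (a : nat -> R) K x :
  (lin_term (fun k => (a k)%:P) (fun k => 'X^k) K).[x] = lin_term a (fun k => x ^+ k) K.
Proof.
elim: K => [|k K IH] /=; first by rewrite horner0.
rewrite hornerD !hornerM IH hornerC hornerXn horner_prod.
by under eq_bigr do rewrite hornerC.
Qed.

Lemma coef_lin_term_Xn (a : nat -> R) K d :
  (lin_term (fun k => (a k)%:P) (fun k => 'X^k) K)`_d =
  (count_mem d K)%:R * \prod_(k <- rem d K) a k.
Proof.
elim: K => [|k K IH] /=; first by rewrite coef0 mul0r.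
rewrite coefD coefCM IH -rmorph_prod coefXnM coefC.
have [<-|neq] := eqVneq k d.
  rewrite ltnn subnn eqxx /= natrD.
  have [kK|kK] := boolP (k \in K).
    have -> : \prod_(j <- K) a j = a k * \prod_(j <- rem k K) a j.
      by rewrite (perm_big _ (perm_to_rem kK)) big_cons.
    ring.
  by rewrite (count_memPn kK) !mul0r mulr0 add0r addr0 mul1r.
rewrite /= add0n big_cons mulrCA.
case: ltngtP => [lt|lt|eq]; first by rewrite addr0.
  by rewrite subn_eq0 leqNgt lt addr0.
by rewrite eq eqxx in neq.
Qed.

Lemma coef_prod_coef0_eq0 (p : nat -> {poly R}) K j :
  (forall k, (p k)`_0 = 0) -> (j <= size K)%N ->
  (\prod_(k <- K) p k)`_j = if j == size K then \prod_(k <- K) (p k)`_1 else 0.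
Proof.
move=> p0 jK.
have pE k : p k = drop_poly 1 (p k) * 'X.
  rewrite -[LHS](poly_take_drop 1) expr1 [take_poly _ _](_ : _ = 0) ?add0r //.
  by apply/polyP => -[|i]; rewrite coef_take_poly coef0 ?p0.
rewrite (eq_bigr _ (fun k _ => pE k)) big_split /= big_const_seq count_predT.
rewrite iter_mulr_1 coefMXn.
have [jlt|jge] := ltnP j (size K); first by rewrite (ltn_eqF jlt).
have -> : j = size K by apply/eqP; rewrite eqn_leq jK jge.
rewrite eqxx subnn -horner_coef0 horner_prod.
by apply: eq_bigr => k _; rewrite horner_coef0 coef_drop_poly.
Qed.

End LinearFactors.

Section CharZero.
Variable F : fieldType.
Hypothesis F_char0 : [pchar F] =i pred0.

Lemma natr_eq0_pchar0 k : (k%:R == 0 :> F) = (k == 0)%N.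
Proof. exact: (proj1 (pcharf0P F) F_char0). Qed.

Lemma natr_inj_pchar0 : injective (fun k : nat => k%:R : F).
Proof.
move=> k k' /eqP; wlog le_kk' : k k' / (k <= k')%N => [wlog|].
  case: (leqP k k') => [/wlog //|/ltnW le_k'k E].
  by apply/esym/(wlog _ _ le_k'k); rewrite eq_sym.
rewrite eq_sym -subr_eq0 -natrB // natr_eq0_pchar0 subn_eq0 => le_k'k.
by apply/eqP; rewrite eqn_leq le_kk'.
Qed.

Lemma poly_eq0_pchar0 (p : {poly F}) : (forall x, p.[x] = 0) -> p = 0.
Proof.
move=> p0; apply/eqP/negPn/negP => nz_p.
pose xs := [seq k%:R : F | k <- iota 0 (size p)].
have xs_roots : all (root p) xs by apply/allP => x /mapP [k _ ->]; apply/rootP.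
have xs_uniq : uniq xs by rewrite map_inj_uniq ?iota_uniq //; apply: natr_inj_pchar0.
by have := max_poly_roots nz_p xs_roots xs_uniq; rewrite size_map size_iota ltnn.
Qed.

Lemma coef_sum_eq0_pchar0 (I : finType) (P : pred I) (be : I -> F) (p : I -> {poly F}) :
  (forall x, \sum_(l | P l) be l * (p l).[x] = 0) ->
  forall j, \sum_(l | P l) be l * (p l)`_j = 0.
Proof.
move=> sum0 j.
have q0 : \sum_(l | P l) be l *: p l = 0.
  apply: poly_eq0_pchar0 => x; rewrite horner_sum -[RHS](sum0 x).
  by under eq_bigr do rewrite hornerZ.
have := congr1 (fun q : {poly F} => q`_j) q0; rewrite coef_sum coef0 => q0j.
by rewrite -[RHS]q0j; under [RHS]eq_bigr do rewrite coefZ.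
Qed.

Definition wpsum (r d : nat) (u s : nat -> F) : F := \sum_(l < r) u l ^+ d * s l.

Lemma wpsum_restrict r N d u s : (r <= N)%N ->
  wpsum N d u (fun j => if (j < r)%N then s j else 0) = wpsum r d u s.
Proof.
move=> le_r_N; rewrite /wpsum (big_ord_widen N (fun j => u j ^+ d * s j) le_r_N).
by rewrite [RHS]big_mkcond; apply: eq_bigr => j _; case: ifP; rewrite ?mulr0.
Qed.

(* Specialising the last pair [(u_r, s_r)] to [(x, y)], the coefficient of [y] and then of [x^d]
   remove one factor [wpsum _ d] from each product. *)
Lemma wpsum_peel r (I : finType) (P : pred I) (be : I -> F) (D : I -> seq nat) d :
  (forall u s, \sum_(l | P l) be l * \prod_(d' <- D l) wpsum r.+1 d' u s = 0) ->
  forall u s, \sum_(l | P l)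
    be l * ((count_mem d (D l))%:R * \prod_(d' <- rem d (D l)) wpsum r d' u s) = 0.
Proof.
move=> sum0 u s; set A := fun d' => wpsum r d' u s.
have sum0_xy x y : \sum_(l | P l) be l * \prod_(d' <- D l) (A d' + x ^+ d' * y) = 0.
  pose upd (f : nat -> F) z j := if j == r then z else f j.
  rewrite -[RHS](sum0 (upd u x) (upd s y)); apply: eq_bigr => l _; congr (_ * _).
  apply: eq_bigr => d' _; rewrite /wpsum big_ord_recr /= /upd eqxx; congr (_ + _).
  by apply: eq_bigr => j _; rewrite (ltn_eqF (ltn_ord j)).
have sum0_x x : \sum_(l | P l) be l * lin_term A (fun d' => x ^+ d') (D l) = 0.
  rewrite -[RHS](@coef_sum_eq0_pchar0 _ P be (fun l =>
    \prod_(d' <- D l) ((A d')%:P + (x ^+ d')%:P * 'X)) _ 1); last first.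
    move=> y; rewrite -[RHS](sum0_xy x y); apply: eq_bigr => l _; rewrite horner_prod.
    by under eq_bigr do rewrite hornerD hornerM !hornerC hornerX.
  by apply: eq_bigr => l _; rewrite coef1_prod_linear.
rewrite -[RHS](@coef_sum_eq0_pchar0 _ P be (fun l =>
  lin_term (fun d' => (A d')%:P) (fun d' => 'X^d') (D l)) _ d); last first.
  by move=> x; rewrite -[RHS](sum0_x x); under eq_bigr do rewrite horner_lin_term_Xn.
by apply: eq_bigr => l _; rewrite coef_lin_term_Xn.
Qed.

Lemma prod_wpsum_indep r (I : finType) (P : pred I) (be : I -> F) (D : I -> seq nat) :
  (forall l, P l -> size (D l) = r) ->
  (forall l l', P l -> P l' -> perm_eq (D l) (D l') -> l = l') ->
  (forall u s, \sum_(l | P l) be l * \prod_(d <- D l) wpsum r d u s = 0) ->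
  forall l, P l -> be l = 0.
Proof.
elim: r I P be D => [|r IH] I P be D D_size D_inj sum0 l0 Pl0.
  have D_nil l : P l -> D l = [::] by move/D_size/size0nil.
  rewrite -[RHS](sum0 (fun=> 0) (fun=> 0)) (bigD1 l0) //= D_nil // big_nil mulr1.
  rewrite [X in _ + X]big1 ?addr0 // => l /andP [Pl /eqP []].
  by apply: D_inj; rewrite // !D_nil.
case D_l0: (D l0) (D_size l0 Pl0) => [//|d D0] _.
have d_in_l0 : d \in D l0 by rewrite D_l0 mem_head.
pose P' l := P l && (d \in D l).
suff : be l0 * (count_mem d (D l0))%:R = 0.
  move/eqP; rewrite mulf_eq0 natr_eq0_pchar0 eqn0Ngt -has_count has_pred1 d_in_l0 orbF.
  by move/eqP.
apply: (IH I P' (fun l => be l * (count_mem d (D l))%:R) (fun l => rem d (D l))).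
- by move=> l /andP [Pl dl]; rewrite size_rem // D_size.
- move=> l l' /andP [Pl dl] /andP [Pl' dl'] pe; apply: D_inj => //.
  rewrite (perm_trans (perm_to_rem dl)) // perm_sym (perm_trans (perm_to_rem dl')) //.
  by rewrite perm_cons perm_sym.
- move=> u s; rewrite -[RHS](@wpsum_peel r I P be D d sum0 u s) big_mkcondr /=.
  apply: eq_bigr => l _; case: ifP => [_|/negbT dl]; first by rewrite mulrA.
  by rewrite (count_memPn dl) !mul0r mulr0.
- by rewrite /P' Pl0.
Qed.

Lemma odd_prod_wpsum_indep r (I : finType) (P : pred I) (be : I -> F) (D : I -> seq nat) :
  (forall l, P l -> size (D l) = r) ->
  (forall l l', P l -> P l' -> perm_eq (D l) (D l') -> l = l') ->
  (forall u s, \sum_(l | P l)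
     be l * \prod_(k <- D l) ((2 * k + 1)%:R * wpsum r (2 * k) u s) = 0) ->
  forall l, P l -> be l = 0.
Proof.
move=> D_size D_inj sum0 l Pl.
have weight_neq0 : \prod_(k <- D l) (2 * k + 1)%:R != 0 :> F.
  by rewrite prodf_seq_neq0; apply/allP => k _; rewrite natr_eq0_pchar0 addn1.
suff /eqP : be l * \prod_(k <- D l) (2 * k + 1)%:R = 0.
  by rewrite mulf_eq0 (negbTE weight_neq0) orbF => /eqP.
have double_inj : injective (fun k => 2 * k)%N.
  by move=> k k' /eqP; rewrite eqn_mul2l => /eqP.
apply: (@prod_wpsum_indep r I P (fun l => be l * \prod_(k <- D l) (2 * k + 1)%:R)
                                (fun l => map (fun k => 2 * k)%N (D l))) => //.
- by move=> l' Pl'; rewrite size_map D_size.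
- by move=> l1 l2 Pl1 Pl2 /(perm_map_inj double_inj); apply: D_inj.
- move=> u s; rewrite -[RHS](sum0 u s); apply: eq_bigr => l' _.
  by rewrite big_map big_split /= mulrA.
Qed.

End CharZero.
Arguments wpsum {F}.

Section PairEval.
Variables (F : fieldType) (n : nat) (u s : nat -> F).
Local Notation i := n./2.

Definition pair_const (j : nat) : F :=
  if (j < i)%N then u j else if (j < i.*2)%N then - u (j - i) else 0.

Definition pair_slope (j : nat) : F := if (j < i)%N then s j else 0.

Definition pair_eval (p : {mpoly F[n]}) : {poly F} :=
  mmap (@polyC F) (fun j : 'I_n => (pair_const j)%:P + (pair_slope j)%:P * 'X) p.

Lemma pair_eval_psum d :
  pair_eval (psum F n d) = \sum_(j < n) ((pair_const j)%:P + (pair_slope j)%:P * 'X) ^+ d.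
Proof.
rewrite /pair_eval /psum rmorph_sum; apply: eq_bigr => j _.
by rewrite rmorphXn /= mmapX mmap1U.
Qed.

Lemma sum_pair_const_odd k : \sum_(j < n) pair_const j ^+ (2 * k + 1) = 0.
Proof.
have le_2i_n : (i.*2 <= n)%N by rewrite -{2}(odd_double_half n) leq_addl.
have le_i_2i : (i <= i.*2)%N by rewrite -addnn leq_addr.
rewrite -(big_mkord xpredT (fun j => pair_const j ^+ (2 * k + 1))).
rewrite (big_cat_nat (leq0n _) le_2i_n) /=.
rewrite [X in _ + X]big1_seq ?addr0; last first.
  move=> j /andP [_]; rewrite mem_index_iota => /andP [le_2i_j _].
  by rewrite /pair_const !ltnNge le_2i_j (leq_trans le_i_2i le_2i_j) expr0n addn1.
rewrite (big_cat_nat (leq0n _) le_i_2i) /= -{2}(add0n i) big_addn -addnn addnK.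
rewrite -big_split big1_seq // => j /=; rewrite mem_index_iota => /andP [_ lt_j_i].
rewrite /pair_const lt_j_i ltnNge leq_addl -addnn ltn_add2r lt_j_i addnK /=.
by rewrite exprNn -signr_odd addn1 /= oddM /= mulN1r subrr.
Qed.

Lemma sum_pair_slope d :
  \sum_(j < n) d%:R * pair_const j ^+ d.-1 * pair_slope j = d%:R * wpsum i d.-1 u s.
Proof.
have le_i_n : (i <= n)%N by rewrite -{2}(odd_double_half n) -addnn addnA leq_addl.
rewrite /wpsum mulr_sumr (big_ord_widen n (fun j => d%:R * (u j ^+ d.-1 * s j)) le_i_n).
rewrite [RHS]big_mkcond; apply: eq_bigr => j _; rewrite /pair_slope /pair_const.
by case: ifP => _; rewrite ?mulr0 ?mulrA.
Qed.

Lemma coef_pair_eval_odd k :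
  (pair_eval (psum F n (2 * k + 1)))`_0 = 0 /\
  (pair_eval (psum F n (2 * k + 1)))`_1 = (2 * k + 1)%:R * wpsum i (2 * k) u s.
Proof.
rewrite pair_eval_psum !coef_sum; split.
  by under eq_bigr do rewrite (coef01_linear_exp _ _ _ _).1; apply: sum_pair_const_odd.
under eq_bigr do rewrite (coef01_linear_exp _ _ _ _).2.
by rewrite sum_pair_slope addn1.
Qed.

Lemma coef_pair_eval_odd_prod K j : (j <= size K)%N ->
  (pair_eval (\prod_(k <- K) psum F n (2 * k + 1)))`_j =
  if j == size K then \prod_(k <- K) ((2 * k + 1)%:R * wpsum i (2 * k) u s) else 0.
Proof.
move=> le_j_K; rewrite /pair_eval rmorph_prod -/pair_eval coef_prod_coef0_eq0 //.
  by under eq_bigr do rewrite (coef_pair_eval_odd _).2.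
by move=> k; rewrite (coef_pair_eval_odd k).1.
Qed.

End PairEval.
Arguments pair_eval {F n}.
Arguments coef_pair_eval_odd_prod {F n}.

Lemma lowest_terms_vanish {F : fieldType} {n : nat} {a : seq nat} {I : finType}
    {alpha : I -> F} {D : I -> seq nat} {r : nat} :
  (r < size a)%N -> (r <= n./2)%N ->
  (forall l, alpha l != 0 -> (r <= size (D l))%N) ->
  \prod_(k <- a) psum F n (2 * k + 1) =
    \sum_l alpha l *: \prod_(k <- D l) psum F n (2 * k + 1) ->
  forall u s, \sum_(l | size (D l) == r)
    alpha l * \prod_(k <- D l) ((2 * k + 1)%:R * wpsum r (2 * k) u s) = 0.
Proof.
move=> lt_r_a le_r_i D_ge rel u s.
pose s' j := if (j < r)%N then s j else 0.
have := congr1 (fun p => (pair_eval u s' p)`_r) rel.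
rewrite /= coef_pair_eval_odd_prod ?(ltnW lt_r_a) // (ltn_eqF lt_r_a) => coef_r.
rewrite [RHS]coef_r /pair_eval raddf_sum coef_sum [LHS]big_mkcond /=.
apply: eq_bigr => l _; rewrite mmapZ coefCM -/(pair_eval u s' _).
have [le_r_D|lt_D_r] := leqP r (size (D l)).
  rewrite coef_pair_eval_odd_prod // eq_sym; case: eqP => _; last by rewrite mulr0.
  by congr (_ * _); apply: eq_bigr => k _; rewrite wpsum_restrict.
have -> : alpha l = 0 by apply/eqP; apply: contraTT lt_D_r => /D_ge; rewrite -leqNgt.
by rewrite !mul0r; case: ifP.
Qed.

Definition factor_seq (d : seq nat * seq nat) : seq nat :=
  flatten [seq nseq (nth 0%N d.1 k) k | k <- iota 0 (size d.1)] ++ d.2.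

Lemma proper_eval_factor_seq (F : fieldType) n d :
  proper_eval F n d = \prod_(k <- factor_seq d) psum F n (2 * k + 1).
Proof.
rewrite /proper_eval /factor_seq big_cat big_flatten big_map /=; congr (_ * _).
rewrite -(big_mkord xpredT (fun k => psum F n (2 * k + 1) ^+ nth 0%N d.1 k)).
by rewrite /index_iota subn0; apply: eq_bigr => k _; rewrite big_nseq iter_mulr_1.
Qed.

Lemma count_factor_seq d x :
  count_mem x (factor_seq d) =
    ((if (x < size d.1)%N then nth 0%N d.1 x else 0) + count_mem x d.2)%N.
Proof.
rewrite count_cat; congr (_ + _)%N.
elim: (size d.1) => [//|N IH].
rewrite -addn1 iotaD map_cat flatten_cat count_cat IH /= cats0 count_nseq add0n addn1 ltnS.
case: ltngtP => [lt|lt|->] /=.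
- by rewrite (gtn_eqF lt) mul0n addn0.
- by rewrite (ltn_eqF lt).
- by rewrite eqxx mul1n.
Qed.

Lemma factor_seq_inj {n : nat} {d d' : seq nat * seq nat} :
  proper_data n d -> proper_data n d' -> perm_eq (factor_seq d) (factor_seq d') -> d = d'.
Proof.
case: d d' => [c b] [c' b'] /and4P [/= /eqP size_c sorted_b big_b _].
move=> /and4P [/= /eqP size_c' sorted_b' big_b' _] /permP pe.
have count_eq x : ((if (x < size c)%N then nth 0%N c x else 0) + count_mem x b =
                   (if (x < size c')%N then nth 0%N c' x else 0) + count_mem x b')%N.
  by rewrite -(count_factor_seq (c, b)) -(count_factor_seq (c', b')).
have count_small (e : seq nat) x :
    all (fun b => (n.-1)./2 < b)%N e -> (x < (n.-1)./2.+1)%N -> count_mem x e = 0%N.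
  by move=> /allP e_big lt_x; apply/count_memPn/negP => /e_big; rewrite ltnNge -ltnS lt_x.
congr (_, _).
  apply: (@eq_from_nth _ 0%N); first by rewrite size_c size_c'.
  move=> x; rewrite size_c => lt_x.
  by have := count_eq x; rewrite size_c size_c' lt_x !count_small ?addn0.
apply: (sorted_eq leq_trans anti_leq sorted_b sorted_b'); apply/allP => y _; apply/eqP.
have := count_eq y; rewrite size_c size_c'.
case: ltnP => [lt_y _|_]; last by rewrite !add0n.
by rewrite (count_small _ _ big_b lt_y) (count_small _ _ big_b' lt_y).
Qed.

Lemma size_factor_seq_nopos d :
  ~~ has (fun c => 0 < c)%N d.1 -> size (factor_seq d) = size d.2.
Proof.
move=> /hasPn c0.
have size_nil :
    {in iota 0 (size d.1), size \o (fun k => nseq (nth 0%N d.1 k) k) =1 fun=> 0%N}.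
  move=> k; rewrite mem_iota add0n => /andP [_ lt_k] /=; rewrite size_nseq.
  by apply/eqP; rewrite -leqn0 leqNgt c0 // mem_nth.
rewrite size_cat size_flatten /shape -map_comp (iffLR (eq_in_map _ _ _) size_nil).
by elim: (iota _ _).
Qed.

Theorem mainTheorem10 (F : fieldType) (hF : [pchar F] =i pred0)
  (n : nat) (hn : (1 <= n)%N)
  (a : seq nat) (ha : size a = (n./2).+1)
  (haj : all (fun x => (n.-1)./2 < x)%N a)
  (m : nat) (alpha : 'I_m -> F) (g : 'I_m -> seq nat * seq nat)
  (hg : forall l, proper_data n (g l))
  (hdist : injective g)
  (hf : long_prod F n a = \sum_(l < m) alpha l *: proper_eval F n (g l)) :
  forall l : 'I_m, alpha l != 0 -> has (fun c => 0 < c)%N (g l).1.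
Proof.
move=> l0 alpha_l0; apply/negPn/negP => no_pos_l0.
pose D l := factor_seq (g l).
have rel : \prod_(k <- a) psum F n (2 * k + 1) =
    \sum_l alpha l *: \prod_(k <- D l) psum F n (2 * k + 1).
  by rewrite -/(long_prod F n a) hf; under eq_bigr do rewrite proper_eval_factor_seq.
pose sizes r := [exists l, (alpha l != 0) && (size (D l) == r)].
have [|r /existsP [l1 /andP [alpha_l1 /eqP size_l1]] r_min] := @ex_minnP sizes.
  by exists (size (D l0)); apply/existsP; exists l0; rewrite alpha_l0 eqxx.
have D_ge l : alpha l != 0 -> (r <= size (D l))%N.
  by move=> alpha_l; apply: r_min; apply/existsP; exists l; rewrite alpha_l eqxx.
have le_r_i : (r <= n./2)%N.
  apply: leq_trans (D_ge _ alpha_l0) _; rewrite size_factor_seq_nopos //.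
  by case/and4P: (hg l0).
have lt_r_a : (r < size a)%N by rewrite ha ltnS.
apply: (negP alpha_l1); apply/eqP.
apply: (@odd_prod_wpsum_indep F hF r _ (fun l => size (D l) == r) alpha D _ _
         (lowest_terms_vanish lt_r_a le_r_i D_ge rel)).
- by move=> l /eqP.
- by move=> l l' _ _ /(factor_seq_inj (hg l) (hg l')) /hdist.
- by rewrite size_l1.
Qed.
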